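(* Let $r\ge2$ be an integer, $m,\ell$ positive integers with $r<2^m$, let $\alpha_0\neq0$ be a real number with $\alpha_0\in(-r/2,r/2]$, and let $B$ be an integer with $1\le B<B_{\max}=(2^{m+\ell}/r-1)/2$. Then $$\sum_{t=-B}^{B}P(\alpha_0+rt)=\frac1r(1-\epsilon_R)+\epsilon_A$$ where $$0\le\epsilon_R\le\frac{1}{\pi^2}\left(\frac{2}{B}+\frac{1}{B^2}+\frac{1}{3B^3}\right)\quad\text{and}\quad|\epsilon_A|\le(2B+1)\tilde\epsilon,\qquad \tilde\epsilon=\frac{\pi^2}{2^{m+\ell}}\left(\frac34+\frac{r}{2^{m+\ell}}\cdot\frac1{12}\right).$$
   Context: Let $\beta=2^{m+\ell}\bmod r$ and $L=\lfloor 2^{m+\ell}/r\rfloor$. For real $\alpha$ not a multiple of $2^{m+\ell}$, $$P(\alpha)=\frac{\beta}{2^{2(m+\ell)}}\cdot\frac{1-\cos(2\pi\alpha(L+1)/2^{m+\ell})}{1-\cos(2\pi\alpha/2^{m+\ell})}+\frac{r-\beta}{2^{2(m+\ell)}}\cdot\frac{1-\cos(2\pi\alpha L/2^{m+\ell})}{1-\cos(2\pi\alpha/2^{m+\ell})}.$$ *)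

From Stdlib Require Import Reals Lra Lia Arith.
Open Scope R_scope.

Definition Nn (m l : nat) : nat := (2 ^ (m + l))%nat.

Definition beta (r m l : nat) : nat := Nat.modulo (Nn m l) r.
Definition Lq (r m l : nat) : nat := Nat.div (Nn m l) r.

(* P(alpha) as in the paper (defined for alpha not a multiple of 2^(m+l)) *)
Definition P (r m l : nat) (alpha : R) : R :=
  let N := INR (Nn m l) in
  let b := INR (beta r m l) in
  let L := INR (Lq r m l) in
  b / (N ^ 2) * ((1 - cos (2 * PI * alpha * (L + 1) / N)) / (1 - cos (2 * PI * alpha / N)))
  + (INR r - b) / (N ^ 2) * ((1 - cos (2 * PI * alpha * L / N)) / (1 - cos (2 * PI * alpha / N))).

(* sum_{t=-B}^{B} P(alpha0 + r t), reindexed as i = t + B in 0..2B *)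
Definition sumP (r m l : nat) (alpha0 : R) (B : nat) : R :=
  sum_f_R0 (fun i => P r m l (alpha0 + INR r * (INR i - INR B))) (2 * B).

Definition eps_tilde (r m l : nat) : R :=
  PI ^ 2 / INR (Nn m l) * (3 / 4 + INR r / INR (Nn m l) * (1 / 12)).

(* Write alpha0 + r t = r (x + t) with x = alpha0 / r in (-1/2, 1/2], x <> 0, and let
   N = 2^(m+l) = r L + beta.  Each P(r (x + t)) is then within 11 r / (4 N^2) of the sinc weight
   sin(PI (x+t))^2 / (r (PI (x+t))^2): the two numerators of P are 1 - cos(2 PI x) perturbed by
   beta- and (r-beta)-weighted shifts whose first-order terms cancel, and 1/(1 - cos y) = 2/y^2 + O(1)
   for |y| <= PI.  So eps_R is the mass the sinc weights leave outside [-B, B].  Summing the Fejer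
   kernel over 2M+1 equally spaced points shows that the window [-M, M] carries a mass between
   1 - 2/(2M+1) and 1; the weights at +-t are at most 1/(PI^2 t (t-1)), which telescopes, and
   M -> oo gives eps_R <= 2/(PI^2 B). *)

From Stdlib Require Import Reals Lra Lia.
Open Scope R_scope.

Fixpoint sum_lt (f : nat -> R) (n : nat) : R :=
  match n with O => 0 | S k => sum_lt f k + f k end.

Lemma sum_lt_ext f g n :
  (forall i, (i < n)%nat -> f i = g i) -> sum_lt f n = sum_lt g n.
Proof. induction n as [|n IH]; simpl; intros H; [reflexivity|]. rewrite IH, H; auto. Qed.

Lemma sum_lt_add f g n : sum_lt (fun i => f i + g i) n = sum_lt f n + sum_lt g n.
Proof. induction n as [|n IH]; simpl; [ring|rewrite IH; ring]. Qed.

Lemma sum_lt_scal c f n : sum_lt (fun i => c * f i) n = c * sum_lt f n.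
Proof. induction n as [|n IH]; simpl; [ring|rewrite IH; ring]. Qed.

Lemma sum_lt_const c n : sum_lt (fun _ => c) n = c * INR n.
Proof. induction n as [|n IH]; simpl sum_lt; [simpl; ring|rewrite IH, S_INR; ring]. Qed.

Lemma sum_lt_swap (F : nat -> nat -> R) n m :
  sum_lt (fun i => sum_lt (F i) m) n = sum_lt (fun j => sum_lt (fun i => F i j) n) m.
Proof.
  induction n as [|n IH]; simpl.
  - induction m as [|m IHm]; simpl; [reflexivity|rewrite <- IHm; ring].
  - rewrite IH, <- sum_lt_add. reflexivity.
Qed.

Lemma sum_lt_le f g n :
  (forall i, (i < n)%nat -> f i <= g i) -> sum_lt f n <= sum_lt g n.
Proof.
  induction n as [|n IH]; simpl; intros H; [lra|].
  pose proof (H n ltac:(lia)). pose proof (IH ltac:(intros; apply H; lia)). lra.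
Qed.

Lemma sum_lt_dist_le f g c n :
  (forall i, (i < n)%nat -> Rabs (f i - g i) <= c) ->
  Rabs (sum_lt f n - sum_lt g n) <= INR n * c.
Proof.
  induction n as [|n IH]; simpl sum_lt; intros H.
  - simpl. rewrite Rminus_diag, Rabs_R0. lra.
  - rewrite S_INR.
    replace (sum_lt f n + f n - (sum_lt g n + g n))
      with ((sum_lt f n - sum_lt g n) + (f n - g n)) by ring.
    eapply Rle_trans; [apply Rabs_triang|].
    pose proof (H n ltac:(lia)). pose proof (IH ltac:(intros; apply H; lia)). lra.
Qed.

Lemma sum_lt_shift f n : sum_lt f (S n) = f O + sum_lt (fun i => f (S i)) n.
Proof. induction n as [|n IH]; simpl; [ring|]. simpl in IH. rewrite IH. ring. Qed.

Lemma sum_f_R0_eq_sum_lt f n : sum_f_R0 f n = sum_lt f (S n).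
Proof. induction n as [|n IH]; simpl; [ring|]. simpl in IH. rewrite IH. ring. Qed.

Lemma sin_ge_cubic u : 0 <= u <= 4 -> u - u^3/6 <= sin u.
Proof.
  intros [h0 h4]. destruct (pre_sin_bound u 0 h0 h4) as [H _].
  unfold sin_approx, sin_term in H. simpl in H. lra.
Qed.

Lemma Rabs_sin_le u : Rabs (sin u) <= Rabs u.
Proof.
  assert (H : forall v, 0 <= v -> - v <= sin v <= v).
  { intros v hv. destruct (Req_dec v 0) as [->|hv0]; [rewrite sin_0; lra|].
    pose proof (sin_lt_x v ltac:(lra)). pose proof (SIN_bound v).
    destruct (Rle_lt_dec v 4); [pose proof (sin_ge_cubic v ltac:(lra))|]; split; nra. }
  destruct (Rle_lt_dec 0 u) as [hu|hu].
  - rewrite (Rabs_pos_eq u hu). apply Rabs_le. apply H, hu.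
  - rewrite (Rabs_left u) by lra. apply Rabs_le.
    pose proof (H (- u) ltac:(lra)). rewrite sin_neg in *. lra.
Qed.

Lemma sin_sq_le u : sin u ^ 2 <= u ^ 2.
Proof.
  rewrite <- pow2_abs, <- (pow2_abs u).
  pose proof (Rabs_sin_le u). pose proof (Rabs_pos (sin u)). nra.
Qed.

Lemma sin_sq_ge u : Rabs u <= 2 -> u^2 * (1 - u^2/6)^2 <= sin u ^ 2.
Proof.
  assert (H : forall v, 0 <= v <= 2 -> v^2 * (1 - v^2/6)^2 <= sin v ^ 2).
  { intros v hv. pose proof (sin_ge_cubic v ltac:(lra)).
    assert (0 <= v - v^3/6) by nra. nra. }
  destruct (Rle_lt_dec 0 u) as [hu|hu].
  - rewrite Rabs_pos_eq by lra. intros; apply H; lra.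
  - rewrite Rabs_left by lra. intros hb.
    pose proof (H (- u) ltac:(lra)). rewrite sin_neg in *. nra.
Qed.

Lemma one_sub_cos_eq y : 1 - cos y = 2 * sin (y/2) ^ 2.
Proof. replace y with (2 * (y/2)) at 1 by field. rewrite cos_2a_sin. ring. Qed.

Lemma one_sub_cos_range y : 0 <= 1 - cos y <= 2.
Proof. pose proof (COS_bound y). lra. Qed.

Lemma one_sub_cos_le y : 1 - cos y <= y^2/2.
Proof. rewrite one_sub_cos_eq. pose proof (sin_sq_le (y/2)). nra. Qed.

Lemma sin_sub_id_le h : Rabs (sin h - h) <= h^2.
Proof.
  assert (H : forall v, 0 <= v -> v - v^2 <= sin v <= v).
  { intros v hv. destruct (Req_dec v 0) as [->|hv0]; [rewrite sin_0; lra|].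
    pose proof (sin_lt_x v ltac:(lra)). pose proof (SIN_bound v).
    destruct (Rle_lt_dec v 4); [pose proof (sin_ge_cubic v ltac:(lra))|]; split; nra. }
  apply Rabs_le. destruct (Rle_lt_dec 0 h) as [hh|hh].
  - pose proof (H h hh). lra.
  - pose proof (H (- h) ltac:(lra)). rewrite sin_neg in *. nra.
Qed.

Lemma inv_one_sub_cos_bounds y : y <> 0 -> Rabs y <= PI ->
  0 < 1 - cos y /\ 2 / y^2 <= / (1 - cos y) <= 2 / y^2 + 1.
Proof.
  intros hy0 hyPI. pose proof PI_4.
  set (u := y/2). set (v := u^2).
  assert (hu : Rabs u <= 2) by (unfold u; unfold Rdiv; rewrite Rabs_mult, (Rabs_pos_eq (/2)); lra).
  assert (hv : 0 < v <= 4).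
  { unfold v. rewrite <- pow2_abs. pose proof (Rabs_pos u).
    assert (Rabs u <> 0) by (apply Rabs_no_R0; unfold u; lra). split; [apply pow_lt|]; nra. }
  assert (hs : v * (1 - v/6)^2 <= sin u ^ 2 <= v) by (split; [apply sin_sq_ge|apply sin_sq_le]; auto).
  assert (hs0 : 0 < sin u ^ 2).
  { assert (0 < v * (1 - v/6)^2) by (apply Rmult_lt_0_compat; [|apply pow_lt]; lra). lra. }
  assert (hpoly : v <= v * (1 - v/6)^2 * (1 + 2*v)).
  { assert (v * (1 - v/6)^2 * (1 + 2*v) - v = v^2 * (4 - v) * (15 - 2*v) / 36) by field.
    assert (0 <= v^2 * (4 - v) * (15 - 2*v)) by (apply Rmult_le_pos; [apply Rmult_le_pos|]; nra). lra. }
  rewrite one_sub_cos_eq. fold u.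
  replace (2 / y^2) with (/ (2 * v)) by (unfold v, u; field; lra).
  split; [lra|split].
  - apply Rinv_le_contravar; lra.
  - replace (/ (2 * v) + 1) with (/ (2 * v / (1 + 2 * v))) by (field; lra).
    apply Rinv_le_contravar.
    + apply Rdiv_lt_0_compat; lra.
    + apply (Rmult_le_reg_r (1 + 2*v)); [lra|]. unfold Rdiv. rewrite Rmult_assoc, Rinv_l by lra. nra.
Qed.

Lemma sin_half_mul_sum_cos a h n :
  2 * sin (h/2) * sum_lt (fun p => cos (a + INR p * h)) n
  = sin (a + INR n * h - h/2) - sin (a - h/2).
Proof.
  induction n as [|n IH]; simpl sum_lt.
  - simpl. replace (a + 0 * h - h/2) with (a - h/2) by ring. ring.
  - rewrite Rmult_plus_distr_l, IH, S_INR.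
    set (c := a + INR n * h).
    replace (a + INR n * h - h/2) with (c - h/2) by (unfold c; ring).
    replace (a + (INR n + 1) * h - h/2) with (c + h/2) by (unfold c; field).
    rewrite sin_plus, sin_minus. ring.
Qed.

Lemma sum_cos_equispaced_eq0 a n j : (0 < j < n)%nat ->
  sum_lt (fun p => cos (a + INR p * (2 * PI * INR j / INR n))) n = 0.
Proof.
  intros hjn. pose proof PI_RGT_0.
  set (h := 2 * PI * INR j / INR n).
  assert (hn : 0 < INR n) by (apply lt_0_INR; lia).
  assert (hj : 0 < INR j < INR n) by (split; [apply lt_0_INR|apply lt_INR]; lia).
  assert (hs : 0 < sin (h/2)).
  { replace (h/2) with (PI * (INR j / INR n)) by (unfold h; field; lra).
    assert (0 < INR j / INR n < 1).
    { split; [apply Rdiv_lt_0_compat; lra|].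
      apply (Rmult_lt_reg_r (INR n)); [lra|]. unfold Rdiv. rewrite Rmult_assoc, Rinv_l; lra. }
    apply sin_gt_0; nra. }
  pose proof (sin_half_mul_sum_cos a h n) as T.
  replace (a + INR n * h - h/2) with ((a - h/2) + 2 * INR j * PI) in T by (unfold h; field; lra).
  rewrite sin_period, Rminus_diag in T.
  apply Rmult_integral in T as [T|T]; [lra|exact T].
Qed.

Definition dirichlet (k : nat) (phi : R) : R :=
  1 + 2 * sum_lt (fun j => cos (INR (S j) * phi)) k.

Definition fejer (n : nat) (phi : R) : R := sum_lt (fun k => dirichlet k phi) n.

Lemma one_sub_cos_mul_dirichlet k phi :
  (1 - cos phi) * dirichlet k phi = cos (INR k * phi) - cos (INR (S k) * phi).
Proof.
  unfold dirichlet. induction k as [|k IH]; cbn [sum_lt].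
  - simpl. rewrite Rmult_0_l, cos_0, Rmult_1_l. ring.
  - replace ((1 - cos phi) * (1 + 2 * (sum_lt (fun j => cos (INR (S j) * phi)) k + cos (INR (S k) * phi))))
      with ((1 - cos phi) * (1 + 2 * sum_lt (fun j => cos (INR (S j) * phi)) k)
            + 2 * cos (INR (S k) * phi) - 2 * cos phi * cos (INR (S k) * phi)) by ring.
    rewrite IH.
    set (c := INR (S k) * phi).
    replace (INR k * phi) with (c - phi) by (unfold c; rewrite S_INR; ring).
    replace (INR (S (S k)) * phi) with (c + phi) by (unfold c; rewrite !S_INR; ring).
    rewrite cos_plus, cos_minus. ring.
Qed.

Lemma one_sub_cos_mul_fejer n phi : (1 - cos phi) * fejer n phi = 1 - cos (INR n * phi).
Proof.
  unfold fejer. induction n as [|n IH]; cbn [sum_lt].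
  - simpl. rewrite Rmult_0_l, cos_0. ring.
  - rewrite Rmult_plus_distr_l, IH, one_sub_cos_mul_dirichlet. ring.
Qed.

(* Only the constant term of each Dirichlet kernel survives averaging over the n-th roots of unity. *)
Lemma sum_fejer_equispaced n phi : (1 <= n)%nat ->
  sum_lt (fun p => fejer n (phi + INR p * (2 * PI / INR n))) n = INR n ^ 2.
Proof.
  intros hn. assert (hn' : 0 < INR n) by (apply lt_0_INR; lia).
  unfold fejer. rewrite sum_lt_swap.
  transitivity (sum_lt (fun _ => INR n) n); [|rewrite sum_lt_const; ring].
  apply sum_lt_ext. intros k hk. unfold dirichlet.
  rewrite sum_lt_add, sum_lt_const, sum_lt_scal, sum_lt_swap.
  rewrite (sum_lt_ext _ (fun _ => 0)); [rewrite sum_lt_const; ring|].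
  intros j hj.
  rewrite <- (sum_cos_equispaced_eq0 (INR (S j) * phi) n (S j)) by lia.
  apply sum_lt_ext. intros p hp. f_equal. field. lra.
Qed.

Lemma sum_inv_one_sub_cos_equispaced n phi : (1 <= n)%nat ->
  (forall p, (p < n)%nat -> cos (phi + INR p * (2 * PI / INR n)) <> 1) ->
  sum_lt (fun p => (1 - cos (INR n * phi)) / (1 - cos (phi + INR p * (2 * PI / INR n)))) n
  = INR n ^ 2.
Proof.
  intros hn hc. assert (hn' : 0 < INR n) by (apply lt_0_INR; lia).
  rewrite <- (sum_fejer_equispaced n phi hn). apply sum_lt_ext. intros p hp.
  pose proof (one_sub_cos_mul_fejer n (phi + INR p * (2 * PI / INR n))) as F.
  replace (INR n * (phi + INR p * (2 * PI / INR n))) with (INR n * phi + 2 * INR p * PI) in F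
    by (field; lra).
  rewrite cos_period in F. rewrite <- F. field.
  pose proof (hc p hp). lra.
Qed.

(* [sin (PI u)^2 / (PI u)^2], written via [1 - cos (2 PI u) = 2 sin (PI u)^2]. *)
Definition sinc_sq (u : R) : R := (1 - cos (2 * PI * u)) / (2 * PI^2 * u^2).

Definition sinc_sq_window (x : R) (M : nat) : R :=
  sum_lt (fun p => sinc_sq (x + (INR p - INR M))) (2 * M + 1).

Lemma scaled_angle_range z n : 0 < n -> z <> 0 -> Rabs z <= n / 2 ->
  2 * PI * z / n <> 0 /\ Rabs (2 * PI * z / n) <= PI.
Proof.
  intros hn hz hzn. pose proof PI_RGT_0.
  assert (hc : 0 < 2 * PI / n) by (apply Rdiv_lt_0_compat; lra).
  replace (2 * PI * z / n) with (2 * PI / n * z) by (field; lra). split.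
  - apply Rmult_integral_contrapositive_currified; lra.
  - rewrite Rabs_mult, (Rabs_pos_eq (2 * PI / n)) by lra.
    apply Rle_trans with (2 * PI / n * (n / 2)); [apply Rmult_le_compat_l; lra|].
    right. field. lra.
Qed.

Lemma sinc_sq_scaled_bounds n u : 0 < n -> u <> 0 -> Rabs u <= n / 2 ->
  let y := 2 * PI * u / n in
  0 < 1 - cos y /\
  n^2 * sinc_sq u <= (1 - cos (2 * PI * u)) / (1 - cos y) <= n^2 * sinc_sq u + 2.
Proof.
  intros hn hu hun y. pose proof PI_RGT_0.
  destruct (scaled_angle_range u n hn hu hun) as [hy0 hyPI].
  destruct (inv_one_sub_cos_bounds y hy0 hyPI) as [hpos [hlo hhi]].
  pose proof (one_sub_cos_range (2 * PI * u)) as hf.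
  assert (hsinc : n^2 * sinc_sq u = (1 - cos (2 * PI * u)) * (2 / y^2)).
  { unfold sinc_sq, y. field. lra. }
  rewrite hsinc. unfold Rdiv at 1. split; [exact hpos|split].
  - apply Rmult_le_compat_l; lra.
  - assert ((1 - cos (2 * PI * u)) * / (1 - cos y) <= (1 - cos (2 * PI * u)) * (2 / y^2 + 1))
      by (apply Rmult_le_compat_l; lra).
    nra.
Qed.

Lemma cos_2PI_add_nat_diff x p M : cos (2 * PI * (x + (INR p - INR M))) = cos (2 * PI * x).
Proof.
  replace (2 * PI * (x + (INR p - INR M))) with ((2 * PI * x - 2 * INR M * PI) + 2 * INR p * PI)
    by ring.
  rewrite cos_period, <- (cos_period (2 * PI * x - 2 * INR M * PI) M). f_equal. ring.
Qed.

Lemma shift_nat_diff_neq0 x p M : -1/2 < x <= 1/2 -> x <> 0 -> x + (INR p - INR M) <> 0.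
Proof.
  intros hx hx0. destruct (Nat.lt_total p M) as [h|[->|h]].
  - apply (le_INR (S p)) in h. rewrite S_INR in h. lra.
  - lra.
  - apply (le_INR (S M)) in h. rewrite S_INR in h. lra.
Qed.

Lemma Rabs_shift_nat_diff_le x p M : -1/2 < x <= 1/2 -> (p <= 2 * M)%nat ->
  Rabs (x + (INR p - INR M)) <= INR M + 1/2.
Proof.
  intros hx hp. apply le_INR in hp. rewrite mult_INR in hp. simpl in hp.
  pose proof (pos_INR p). apply Rabs_le. lra.
Qed.

Lemma sinc_sq_window_fejer x M : -1/2 < x <= 1/2 -> x <> 0 ->
  let n := INR (2 * M + 1) in
  n^2 * sinc_sq_window x M <= n^2 <= n^2 * sinc_sq_window x M + 2 * n.
Proof.
  intros hx hx0 n.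
  assert (hn : n = 2 * INR M + 1) by (unfold n; rewrite plus_INR, mult_INR; simpl; ring).
  assert (hn0 : 0 < n) by (rewrite hn; pose proof (pos_INR M); lra).
  set (phi := 2 * PI * (x - INR M) / n).
  assert (hphi : forall p, phi + INR p * (2 * PI / n) = 2 * PI * (x + (INR p - INR M)) / n)
    by (intros p; unfold phi; field; lra).
  assert (hterm : forall p, (p < 2 * M + 1)%nat ->
    0 < 1 - cos (phi + INR p * (2 * PI / n)) /\
    n^2 * sinc_sq (x + (INR p - INR M))
      <= (1 - cos (INR (2 * M + 1) * phi)) / (1 - cos (phi + INR p * (2 * PI / n)))
      <= n^2 * sinc_sq (x + (INR p - INR M)) + 2).
  { intros p hp. fold n. rewrite hphi.
    replace (n * phi) with (2 * PI * (x + (INR 0 - INR M))) by (unfold phi; simpl; field; lra).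
    rewrite cos_2PI_add_nat_diff, <- (cos_2PI_add_nat_diff x p M).
    apply sinc_sq_scaled_bounds; [lra|apply shift_nat_diff_neq0; auto|].
    pose proof (Rabs_shift_nat_diff_le x p M hx ltac:(lia)). lra. }
  pose proof (sum_inv_one_sub_cos_equispaced (2 * M + 1) phi ltac:(lia)) as F.
  fold n in F, hterm. specialize (F ltac:(intros p hp; pose proof (hterm p hp); lra)).
  set (g := fun p => (1 - cos (n * phi)) / (1 - cos (phi + INR p * (2 * PI / n)))) in F.
  assert (hg : forall p, (p < 2 * M + 1)%nat ->
    n^2 * sinc_sq (x + (INR p - INR M)) <= g p <= n^2 * sinc_sq (x + (INR p - INR M)) + 2)
    by exact (fun p hp => proj2 (hterm p hp)).
  unfold sinc_sq_window. rewrite <- sum_lt_scal. split.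
  - apply Rle_trans with (sum_lt g (2 * M + 1)); [|lra].
    apply sum_lt_le. intros p hp. apply hg, hp.
  - apply Rle_trans with (sum_lt g (2 * M + 1)); [lra|].
    replace (2 * n) with (sum_lt (fun _ => 2) (2 * M + 1)) by (rewrite sum_lt_const; fold n; ring).
    rewrite <- sum_lt_add. apply sum_lt_le. intros p hp. apply hg, hp.
Qed.

Lemma sinc_sq_window_le_1 x M : -1/2 < x <= 1/2 -> x <> 0 -> sinc_sq_window x M <= 1.
Proof.
  intros hx hx0. destruct (sinc_sq_window_fejer x M hx hx0) as [W _].
  assert (0 < INR (2 * M + 1)) by (apply lt_0_INR; lia).
  apply (Rmult_le_reg_l (INR (2 * M + 1) ^ 2)); [apply pow_lt; lra|lra].
Qed.

Lemma sinc_sq_window_ge x M : -1/2 < x <= 1/2 -> x <> 0 ->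
  1 - 2 / INR (2 * M + 1) <= sinc_sq_window x M.
Proof.
  intros hx hx0. destruct (sinc_sq_window_fejer x M hx hx0) as [_ W].
  set (n := INR (2 * M + 1)) in *. assert (0 < n) by (apply lt_0_INR; lia).
  apply (Rmult_le_reg_l (n ^ 2)); [apply pow_lt; lra|].
  replace (n^2 * (1 - 2 / n)) with (n^2 - 2 * n) by (field; lra). lra.
Qed.

Lemma sinc_sq_le_far u K : 2 <= K -> K - 1/2 <= Rabs u ->
  sinc_sq u <= / PI^2 * (1 / (K - 1) - 1 / K).
Proof.
  intros hK hu. unfold sinc_sq. pose proof (one_sub_cos_range (2 * PI * u)). pose proof PI_RGT_0.
  assert (hpi : 0 < PI^2) by (apply pow_lt; lra).
  assert (hu2 : K * (K - 1) <= u^2) by (rewrite <- pow2_abs; nra).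
  replace (/ PI^2 * (1 / (K - 1) - 1 / K)) with (2 / (2 * PI^2 * (K * (K - 1)))) by (field; lra).
  assert (hK0 : 0 < K * (K - 1)) by nra.
  unfold Rdiv. apply Rmult_le_compat; try lra.
  - apply Rlt_le, Rinv_0_lt_compat. apply Rmult_lt_0_compat; lra.
  - apply Rinv_le_contravar; [apply Rmult_lt_0_compat|apply Rmult_le_compat_l]; lra.
Qed.

Lemma sum_window_succ (F : R -> R) M :
  sum_lt (fun p => F (INR p - INR (S M))) (2 * S M + 1)
  = sum_lt (fun p => F (INR p - INR M)) (2 * M + 1) + F (INR (S M)) + F (- INR (S M)).
Proof.
  replace (2 * S M + 1)%nat with (S (S (2 * M + 1))) by lia.
  rewrite sum_lt_shift. cbn [sum_lt].
  rewrite (sum_lt_ext _ (fun p => F (INR p - INR M))) by (intros i _; f_equal; rewrite !S_INR; ring).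
  replace (INR 0 - INR (S M)) with (- INR (S M)) by (simpl; ring).
  replace (INR (S (2 * M + 1)) - INR (S M)) with (INR (S M))
    by (rewrite !S_INR, plus_INR, mult_INR; simpl; ring).
  ring.
Qed.

Lemma sinc_sq_window_add_le x B d : -1/2 < x <= 1/2 -> (1 <= B)%nat ->
  sinc_sq_window x (B + d) <= sinc_sq_window x B + 2 / PI^2 * (1 / INR B - 1 / INR (B + d)).
Proof.
  intros hx hB. induction d as [|d IH].
  - rewrite Nat.add_0_r. lra.
  - rewrite Nat.add_succ_r. unfold sinc_sq_window in *.
    rewrite (sum_window_succ (fun t => sinc_sq (x + t))). cbv beta.
    set (K := INR (S (B + d))).
    assert (hK : K - 1 = INR (B + d)) by (unfold K; rewrite S_INR; ring).
    assert (hK2 : 2 <= K) by (unfold K; rewrite S_INR, plus_INR; apply (le_INR 1) in hB;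
      simpl in hB; pose proof (pos_INR d); lra).
    pose proof (sinc_sq_le_far (x + K) K hK2 ltac:(rewrite Rabs_pos_eq; lra)).
    pose proof (sinc_sq_le_far (x + - K) K hK2 ltac:(rewrite Rabs_left; lra)).
    rewrite hK in *.
    replace (2 / PI^2 * (1 / INR B - 1 / K))
      with (2 / PI^2 * (1 / INR B - 1 / INR (B + d)) + 2 * (/ PI^2 * (1 / INR (B + d) - 1 / K)))
      by (unfold Rdiv; ring).
    lra.
Qed.

(* Let the window grow: its mass tends to 1, while the part beyond B stays below 2/(PI^2 B). *)
Lemma sinc_sq_window_lower x B : -1/2 < x <= 1/2 -> x <> 0 -> (1 <= B)%nat ->
  1 - 2 / (PI^2 * INR B) <= sinc_sq_window x B.
Proof.
  intros hx hx0 hB. pose proof PI_RGT_0.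
  assert (hB' : 1 <= INR B) by (apply (le_INR 1); exact hB).
  cut (1 <= sinc_sq_window x B + 2 / (PI^2 * INR B)); [lra|].
  apply Rle_plus_epsilon. intros eps heps.
  destruct (archimed_cor1 eps heps) as [d [hd hd0]].
  assert (hd' : 0 < INR d) by (apply lt_0_INR; exact hd0).
  pose proof (sinc_sq_window_ge x (B + d) hx hx0) as Hge.
  pose proof (sinc_sq_window_add_le x B d hx hB) as Hadd.
  assert (hBd : INR B <= INR (B + d)) by (apply le_INR; lia).
  assert (h1 : 2 / INR (2 * (B + d) + 1) <= / INR d).
  { replace (INR (2 * (B + d) + 1)) with (2 * (INR B + INR d) + 1)
      by (rewrite plus_INR, mult_INR, plus_INR; simpl; ring).
    replace (2 / (2 * (INR B + INR d) + 1)) with (/ ((2 * (INR B + INR d) + 1) / 2)) by (field; lra).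
    apply Rinv_le_contravar; lra. }
  assert (h2 : 2 / PI^2 * (1 / INR B - 1 / INR (B + d)) <= 2 / (PI^2 * INR B)).
  { replace (2 / (PI^2 * INR B)) with (2 / PI^2 * (1 / INR B)) by (field; lra).
    apply Rmult_le_compat_l; [apply Rlt_le, Rdiv_lt_0_compat; [lra|apply pow_lt; lra]|].
    assert (0 < 1 / INR (B + d)) by (apply Rdiv_lt_0_compat; lra). lra. }
  lra.
Qed.

Lemma cos_second_order a h : Rabs (cos a - cos (a + h) - h * sin a) <= 3/2 * h^2.
Proof.
  rewrite cos_plus.
  replace (cos a - (cos a * cos h - sin a * sin h) - h * sin a)
    with (cos a * (1 - cos h) + sin a * (sin h - h)) by ring.
  eapply Rle_trans; [apply Rabs_triang|]. rewrite !Rabs_mult.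
  pose proof (one_sub_cos_le h). pose proof (one_sub_cos_range h). pose proof (sin_sub_id_le h).
  rewrite (Rabs_pos_eq (1 - cos h)) by lra.
  assert (Rabs (cos a) <= 1) by (apply Rabs_le, COS_bound).
  assert (Rabs (sin a) <= 1) by (apply Rabs_le, SIN_bound).
  pose proof (Rabs_pos (cos a)). pose proof (Rabs_pos (sin a)). nra.
Qed.

(* The balance condition cancels the first-order terms. *)
Lemma weighted_cos_second_order a h1 h2 w1 w2 : 0 <= w1 -> 0 <= w2 -> w1 * h1 + w2 * h2 = 0 ->
  Rabs (w1 * (1 - cos (a + h1)) + w2 * (1 - cos (a + h2)) - (w1 + w2) * (1 - cos a))
  <= 3/2 * (w1 * h1^2 + w2 * h2^2).
Proof.
  intros hw1 hw2 hbal.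
  replace (w1 * (1 - cos (a + h1)) + w2 * (1 - cos (a + h2)) - (w1 + w2) * (1 - cos a))
    with (w1 * (cos a - cos (a + h1) - h1 * sin a) + w2 * (cos a - cos (a + h2) - h2 * sin a)
          + sin a * (w1 * h1 + w2 * h2)) by ring.
  rewrite hbal, Rmult_0_r, Rplus_0_r.
  eapply Rle_trans; [apply Rabs_triang|].
  rewrite !Rabs_mult, (Rabs_pos_eq w1), (Rabs_pos_eq w2) by assumption.
  pose proof (cos_second_order a h1). pose proof (cos_second_order a h2).
  assert (w1 * Rabs (cos a - cos (a + h1) - h1 * sin a) <= w1 * (3/2 * h1^2))
    by (apply Rmult_le_compat_l; assumption).
  assert (w2 * Rabs (cos a - cos (a + h2) - h2 * sin a) <= w2 * (3/2 * h2^2))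
    by (apply Rmult_le_compat_l; assumption).
  lra.
Qed.

Lemma P_numerator_approx r b k a : 0 <= b <= r ->
  Rabs (b * (1 - cos (a + (r - b) * k)) + (r - b) * (1 - cos (a + - b * k)) - r * (1 - cos a))
  <= 3/8 * r * (r * k)^2.
Proof.
  intros hb.
  pose proof (weighted_cos_second_order a ((r - b) * k) (- b * k) b (r - b)
    ltac:(lra) ltac:(lra) ltac:(ring)) as W.
  replace (b + (r - b)) with r in W by ring.
  eapply Rle_trans; [exact W|].
  assert (b * (r - b) <= r^2 / 4) by (pose proof (pow2_ge_0 (r - 2 * b)); nra).
  replace (3/2 * (b * ((r - b) * k)^2 + (r - b) * (- b * k)^2))
    with (3/2 * r * k^2 * (b * (r - b))) by ring.
  replace (3/8 * r * (r * k)^2) with (3/2 * r * k^2 * (r^2 / 4)) by field.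
  apply Rmult_le_compat_l; [pose proof (pow2_ge_0 k); nra|assumption].
Qed.

Lemma P_formula_approx_sinc_sq (N r b L u : R) :
  0 < r -> 0 <= b <= r -> N = r * L + b -> u <> 0 -> Rabs (r * u) <= N / 2 ->
  let alpha := r * u in
  Rabs (b / N^2 * ((1 - cos (2 * PI * alpha * (L + 1) / N)) / (1 - cos (2 * PI * alpha / N)))
      + (r - b) / N^2 * ((1 - cos (2 * PI * alpha * L / N)) / (1 - cos (2 * PI * alpha / N)))
      - sinc_sq u / r) <= 11/4 * r / N^2.
Proof.
  intros hr hb hN hu hru alpha. pose proof PI_RGT_0.
  assert (hru_ne : r * u <> 0) by (apply Rmult_integral_contrapositive_currified; lra).
  assert (hN0 : 0 < N) by (pose proof (Rabs_pos_lt _ hru_ne); lra).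
  set (k := 2 * PI * u / N).
  set (theta := 2 * PI * alpha / N).
  assert (htheta : theta = r * k) by (unfold theta, k, alpha; field; lra).
  destruct (scaled_angle_range alpha N hN0 hru_ne hru) as [htheta0 hthetaPI].
  fold theta in htheta0, hthetaPI.
  destruct (inv_one_sub_cos_bounds theta htheta0 hthetaPI) as [hpos [hlo hhi]].
  set (c := / (1 - cos theta) - 2 / theta^2).
  set (f := 1 - cos (2 * PI * u)).
  set (Q := b * (1 - cos (2 * PI * u + (r - b) * k)) + (r - b) * (1 - cos (2 * PI * u + - b * k))).
  assert (hQf : Rabs (Q - r * f) <= 3/8 * r * theta^2)
    by (rewrite htheta; apply P_numerator_approx; lra).
  assert (hQ : 0 <= Q <= 2 * r).
  { unfold Q. pose proof (one_sub_cos_range (2 * PI * u + (r - b) * k)).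
    pose proof (one_sub_cos_range (2 * PI * u + - b * k)). nra. }
  replace (2 * PI * alpha * (L + 1) / N) with (2 * PI * u + (r - b) * k)
    by (unfold alpha, k; rewrite hN; field; lra).
  replace (2 * PI * alpha * L / N) with (2 * PI * u + - b * k)
    by (unfold alpha, k; rewrite hN; field; lra).
  fold theta.
  replace (b / N^2 * ((1 - cos (2 * PI * u + (r - b) * k)) / (1 - cos theta))
           + (r - b) / N^2 * ((1 - cos (2 * PI * u + - b * k)) / (1 - cos theta)) - sinc_sq u / r)
    with (((Q - r * f) * (2 / theta^2) + Q * c) / N^2)
    by (unfold c, Q, f, sinc_sq; unfold theta, alpha, k in *; field; repeat split; lra).
  assert (hc : 0 <= c <= 1) by (unfold c; lra).
  assert (h1 : Rabs ((Q - r * f) * (2 / theta^2)) <= 3/4 * r).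
  { assert (0 < theta^2) by (rewrite <- Rsqr_pow2; apply Rsqr_pos_lt, htheta0).
    rewrite Rabs_mult, (Rabs_pos_eq (2 / theta^2)) by (apply Rlt_le, Rdiv_lt_0_compat; lra).
    apply Rle_trans with (3/8 * r * theta^2 * (2 / theta^2));
      [apply Rmult_le_compat_r; [apply Rlt_le, Rdiv_lt_0_compat; lra|exact hQf]|].
    right. field. lra. }
  assert (h2 : Rabs ((Q - r * f) * (2 / theta^2) + Q * c) <= 11/4 * r).
  { eapply Rle_trans; [apply Rabs_triang|]. rewrite (Rabs_pos_eq (Q * c)) by nra. nra. }
  assert (hN2 : 0 < N^2) by (apply pow_lt; lra).
  unfold Rdiv. rewrite Rabs_mult, (Rabs_pos_eq (/ N^2)) by (apply Rlt_le, Rinv_0_lt_compat, hN2).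
  apply Rmult_le_compat_r; [apply Rlt_le, Rinv_0_lt_compat, hN2|exact h2].
Qed.

Lemma P_approx_sinc_sq r m l u : (1 <= r)%nat -> u <> 0 -> Rabs (INR r * u) <= INR (Nn m l) / 2 ->
  Rabs (P r m l (INR r * u) - sinc_sq u / INR r) <= 11/4 * INR r / INR (Nn m l) ^ 2.
Proof.
  intros hr hu hru. unfold P. cbv zeta.
  apply P_formula_approx_sinc_sq; [apply lt_0_INR; lia| |unfold beta, Lq|exact hu|exact hru].
  - split; [apply pos_INR|apply le_INR, Nat.lt_le_incl, Nat.mod_upper_bound; lia].
  - rewrite <- mult_INR, <- plus_INR. f_equal. apply Nat.div_mod_eq.
Qed.

Lemma approx_error_le_eps_tilde r m l : (0 < r)%nat -> (r < Nn m l)%nat ->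
  11/4 * INR r / INR (Nn m l) ^ 2 <= eps_tilde r m l.
Proof.
  intros hr hrN. unfold eps_tilde.
  apply lt_INR in hrN. pose proof (lt_0_INR r hr).
  set (N := INR (Nn m l)) in *. pose proof PI2_1.
  assert (hpi : 4 < PI^2) by nra.
  assert (0 <= INR r / N * (1/12)) by (apply Rmult_le_pos; [apply Rlt_le, Rdiv_lt_0_compat|]; lra).
  apply Rle_trans with (PI^2 / N * (3/4)).
  - replace (PI^2 / N * (3/4)) with (3/4 * PI^2 * N / N^2) by (field; lra).
    unfold Rdiv. apply Rmult_le_compat_r; [apply Rlt_le, Rinv_0_lt_compat, pow_lt; lra|nra].
  - apply Rmult_le_compat_l; [apply Rlt_le, Rdiv_lt_0_compat; lra|lra].
Qed.

Lemma eps_R_bound_ge B : (1 <= B)%nat ->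
  2 / (PI^2 * INR B) <= / PI ^ 2 * (2 / INR B + 1 / INR B ^ 2 + 1 / (3 * INR B ^ 3)).
Proof.
  intros hB1. apply (le_INR 1) in hB1. simpl in hB1. pose proof PI_RGT_0.
  assert (0 < INR B ^ 2) by (apply pow_lt; lra). assert (0 < INR B ^ 3) by (apply pow_lt; lra).
  replace (/ PI ^ 2 * (2 / INR B + 1 / INR B ^ 2 + 1 / (3 * INR B ^ 3)))
    with (2 / (PI^2 * INR B) + / PI^2 * (1 / INR B ^ 2 + 1 / (3 * INR B ^ 3))) by (field; lra).
  assert (0 <= / PI^2 * (1 / INR B ^ 2 + 1 / (3 * INR B ^ 3))).
  { apply Rmult_le_pos; [apply Rlt_le, Rinv_0_lt_compat, pow_lt; lra|].
    assert (0 < 1 / INR B ^ 2) by (apply Rdiv_lt_0_compat; lra).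
    assert (0 < 1 / (3 * INR B ^ 3)) by (apply Rdiv_lt_0_compat; lra). lra. }
  lra.
Qed.

Lemma sumP_approx_sinc_sq_window r m l B x : (1 <= r)%nat -> (r < Nn m l)%nat ->
  -1/2 < x <= 1/2 -> x <> 0 -> INR r * (2 * INR B + 1) < INR (Nn m l) ->
  Rabs (sumP r m l (INR r * x) B - sinc_sq_window x B / INR r) <= (2 * INR B + 1) * eps_tilde r m l.
Proof.
  intros hr hrN hx hx0 hBN. assert (hr0 : 0 < INR r) by (apply lt_0_INR; lia).
  unfold sumP, sinc_sq_window. rewrite sum_f_R0_eq_sum_lt.
  replace (S (2 * B)) with (2 * B + 1)%nat by lia.
  unfold Rdiv at 1. rewrite (Rmult_comm _ (/ INR r)), <- sum_lt_scal.
  replace (2 * INR B + 1) with (INR (2 * B + 1)) by (rewrite plus_INR, mult_INR; simpl; ring).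
  apply Rle_trans with (INR (2 * B + 1) * (11/4 * INR r / INR (Nn m l) ^ 2)).
  - apply sum_lt_dist_le. intros i hi.
    replace (INR r * x + INR r * (INR i - INR B)) with (INR r * (x + (INR i - INR B))) by ring.
    replace (/ INR r * sinc_sq (x + (INR i - INR B)))
      with (sinc_sq (x + (INR i - INR B)) / INR r) by (unfold Rdiv; ring).
    apply P_approx_sinc_sq; [lia|apply shift_nat_diff_neq0; assumption|].
    pose proof (Rabs_shift_nat_diff_le x i B hx ltac:(lia)).
    rewrite Rabs_mult, Rabs_pos_eq by lra. nra.
  - apply Rmult_le_compat_l; [apply pos_INR|apply approx_error_le_eps_tilde; lia].
Qed.

Theorem theorem1 (r m l B : nat) (alpha0 : R)
  (hr : (2 <= r)%nat) (hm : (1 <= m)%nat) (hl : (1 <= l)%nat)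
  (hrm : (r < 2 ^ m)%nat)
  (ha0 : alpha0 <> 0) (ha1 : - INR r / 2 < alpha0) (ha2 : alpha0 <= INR r / 2)
  (hB1 : (1 <= B)%nat)
  (hB2 : INR B < (INR (Nn m l) / INR r - 1) / 2) :
  exists epsR epsA : R,
    sumP r m l alpha0 B = / INR r * (1 - epsR) + epsA /\
    0 <= epsR /\
    epsR <= / PI ^ 2 * (2 / INR B + 1 / INR B ^ 2 + 1 / (3 * INR B ^ 3)) /\
    Rabs epsA <= (2 * INR B + 1) * eps_tilde r m l.
Proof.
  assert (hr0 : 0 < INR r) by (apply lt_0_INR; lia).
  assert (hrN : (r < Nn m l)%nat)
    by (unfold Nn; eapply Nat.lt_le_trans; [exact hrm|apply Nat.pow_le_mono_r; lia]).
  assert (hBN : INR r * (2 * INR B + 1) < INR (Nn m l)).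
  { apply (Rmult_lt_compat_l (INR r)) in hB2; [|exact hr0].
    replace (INR r * ((INR (Nn m l) / INR r - 1) / 2)) with ((INR (Nn m l) - INR r) / 2) in hB2
      by (field; lra). lra. }
  set (x := alpha0 / INR r).
  assert (ha : alpha0 = INR r * x) by (unfold x; field; lra).
  assert (hx : -1/2 < x <= 1/2) by (rewrite ha in ha1, ha2; split; nra).
  assert (hx0 : x <> 0) by (intros hx0; rewrite hx0, Rmult_0_r in ha; contradiction).
  pose proof (sinc_sq_window_le_1 x B hx hx0).
  pose proof (sinc_sq_window_lower x B hx hx0 hB1).
  pose proof (eps_R_bound_ge B hB1).
  exists (1 - sinc_sq_window x B), (sumP r m l alpha0 B - sinc_sq_window x B / INR r).
  split; [field; lra|split; [lra|split; [lra|]]].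
  rewrite ha. apply sumP_approx_sinc_sq_window; auto; lia.
Qed.
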